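(* Let $N=1$. For all choices of the unitaries $U_1,\dots,U_L$ and of the Hermitian unitary $\tilde O$, the following control tensors vanish identically (for all window strings $\vec n$ with $L\ge n_1\ge\cdots\ge n_k\ge1$ satisfying the indicated equalities): (i) $k=2$: $\mathbf{T}^{(2)}_{(1)}(n_1,n_2)=0$ whenever $n_1=n_2$. (ii) $k=3$: $\mathbf{T}^{(3)}_{(0,1)}(\vec n)=0$ and $\mathbf{T}^{(3)}_{(1,0)}(\vec n)=0$ whenever $n_2=n_3$; $\mathbf{T}^{(3)}_{(1,1)}(\vec n)=0$ whenever $n_1=n_2$. (iii) $k=4$: $\mathbf{T}^{(4)}_{\mu}(\vec n)=0$ in each of the cases: $\mu=(0,0,1)$ with $n_3=n_4$; $\mu=(0,1,0)$ with $n_3=n_4$; $\mu=(0,1,0)$ with $n_2=n_3$; $\mu=(0,1,1)$ with $n_2=n_3$; $\mu=(1,0,0)$ with $n_2=n_3$; $\mu=(1,0,0)$ with $n_1=n_2$; $\mu=(1,0,1)$ with $n_2=n_3$; $\mu=(1,0,1)$ with $n_1=n_2$; $\mu=(1,1,0)$ with $n_1=n_2$; $\mu=(1,1,0)$ with $n_3=n_4$; $\mu=(1,1,1)$ with $n_1=n_2$.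
   Context: Fix integers $L\ge 1$ and $N\ge 1$, and a set $Q$ of $N$ qubit labels. For $q\in Q$ let $\sigma_z^{[q]}$ denote the Pauli-$Z$ operator acting on qubit $q$ tensored with the identity on all other qubits of $(\mathbb{C}^2)^{\otimes N}$. (Digital control) Let $U_1,\dots,U_L$ be arbitrary unitaries on $(\mathbb{C}^2)^{\otimes N}$ ($U_n$ is the control propagator, constant on the $n$-th time window), and let $\tilde O$ be an arbitrary Hermitian unitary operator on $(\mathbb{C}^2)^{\otimes N}$ (the toggling-frame observable). For $q\in Q$ and $n\in\{1,\dots,L\}$ define $\tilde h_q(n)=U_n^\dagger\sigma_z^{[q]}U_n$ and $\bar h_q(n)=-\tilde O^{-1}\tilde h_q(n)\tilde O$. For $k\ge1$, a window string $\vec n=(n_1,\dots,n_k)$ with $L\ge n_1\ge\cdots\ge n_k\ge1$, a qubit string $\vec q=(q_1,\dots,q_k)\in Q^k$ and a sign string $\mu\in\{0,1\}^{k-1}$, the (window-framed) control tensor is $$\mathbf{T}^{(k)}_{\vec q;\mu}(\vec n)=\sum_{b\in\{0,1\}^k}(-1)^{\sum_{j=1}^{k-1}\mu_j b_{j+1}}\Big(\prod^{\downarrow}_{i:\,b_i=1}\bar h_{q_i}(n_i)\Big)\Big(\prod^{\uparrow}_{i:\,b_i=0}\tilde h_{q_i}(n_i)\Big),$$ where $\prod^{\downarrow}$ is the ordered product with the index $i$ decreasing from left to right, $\prod^{\uparrow}$ is the ordered product with $i$ increasing from left to right, and an empty product is the identity. When $N=1$ the qubit string is omitted and we write $\mathbf{T}^{(k)}_{\mu}(\vec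 n)$. *)

(* Single qubit (N = 1): operators are 2x2 matrices over an
   arbitrary numClosedFieldType C (e.g. the complex numbers), conj = Num.conj. *)
From HB Require Import structures.
From mathcomp Require Import all_boot all_order all_algebra.
Set Implicit Arguments. Unset Strict Implicit. Unset Printing Implicit Defensive.
Import Order.TTheory GRing.Theory Num.Theory.
Local Open Scope ring_scope.

Section Defs.
Variable C : numClosedFieldType.

Definition adj (A : 'M[C]_2) : 'M[C]_2 := map_mx Num.conj (A^T).

Definition unitary (A : 'M[C]_2) : Prop := A *m adj A = 1%:M /\ adj A *m A = 1%:M.
Definition is_hermitian (A : 'M[C]_2) : Prop := adj A = A.

Definition sigma_z : 'M[C]_2 :=
  \matrix_(i < 2, j < 2) (if i == j then (if i == 0 :> nat then 1 else -1) else 0).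

Definition htil (U : nat -> 'M[C]_2) (n : nat) : 'M[C]_2 :=
  adj (U n) *m sigma_z *m U n.

Definition hbar (U : nat -> 'M[C]_2) (O : 'M[C]_2) (n : nat) : 'M[C]_2 :=
  - (invmx O *m htil U n *m O).

(* Control tensor T^{(k)}_mu(n_1..n_k), with k = size ns; indices are 0-based:
   ns = [n_1; ...; n_k], mu = [mu_1; ...; mu_{k-1}], b = [b_1; ...; b_k].
   sign: (-1)^{sum_{j=1}^{k-1} mu_j b_{j+1}}; first product: i decreasing over
   {i | b_i = 1} of hbar; second: i increasing over {i | b_i = 0} of htil. *)
Definition ctensor (U : nat -> 'M[C]_2) (O : 'M[C]_2) (ns : seq nat)
    (mu : seq bool) : 'M[C]_2 :=
  \sum_(b : (size ns).-tuple bool)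
    ((-1) ^+ (\sum_(j < (size ns).-1) (nth false mu j && nth false b j.+1))%N
     *: ((\prod_(i <- rev (iota 0 (size ns)) | nth false b i) hbar U O (nth 0%N ns i))
         * (\prod_(i <- iota 0 (size ns) | ~~ nth false b i) htil U (nth 0%N ns i)))).

End Defs.

Definition window (L : nat) (ns : seq nat) : bool :=
  sorted geq ns && all (fun n => (0 < n <= L)%N) ns.

(* If two adjacent windows coincide, n_j = n_(j+1), flip both bits b_j and b_(j+1).
   This is a fixed-point-free involution on the index set of the sum.  Since h~(n) and
   h-bar(n) square to 1 and both windows carry the same operators, the operator product
   is unchanged: a pair h-bar h-bar cancels as h~ h~ does, and a mixed pair only trades
   places.  The sign, however, changes by (-1)^(mu_(j-1) + mu_j), so for mu_(j-1) <> mu_j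
   (with mu_0 = 0) the terms cancel in pairs.  Every listed case is of this form. *)

From HB Require Import structures.
From mathcomp Require Import all_boot all_order all_algebra.
Set Implicit Arguments. Unset Strict Implicit. Unset Printing Implicit Defensive.
Import Order.TTheory GRing.Theory Num.Theory.
Local Open Scope ring_scope.

Lemma sum_eq0_involution (V : zmodType) (I : finType) (phi : I -> I) (P : pred I)
    (F : I -> V) :
  involutive phi -> (forall i, P (phi i) = ~~ P i) -> (forall i, F (phi i) = - F i) ->
  \sum_i F i = 0.
Proof.
move=> phiK Pphi Fphi.
rewrite (bigID P) /= [X in _ + X](reindex_inj (inv_inj phiK)) /=.
under [X in _ + X]eq_bigl do rewrite Pphi negbK.
by under [X in _ + X]eq_bigr do rewrite Fphi; rewrite sumrN subrr.
Qed.

Definition flip_pair k j (t : k.-tuple bool) : k.-tuple bool :=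
  [tuple ((i == j :> nat) || (i == j.+1 :> nat)) (+) tnth t i | i < k].

Lemma flip_pairK k j : involutive (@flip_pair k j).
Proof. by move=> t; apply: eq_from_tnth => i; rewrite !tnth_mktuple addKb. Qed.

Lemma nth_flip_pair k j (t : k.-tuple bool) i : (i < k)%N ->
  nth false (flip_pair j t) i = ((i == j) || (i == j.+1)) (+) nth false t i.
Proof. by move=> ltik; rewrite (_ : i = Ordinal ltik) // nth_mktuple (tnth_nth false). Qed.

Lemma sign_exponentE (mu b : seq bool) k :
  (\sum_(j < k.-1) (nth false mu j && nth false b j.+1))%N =
  (\sum_(i < k) (nth false (false :: mu) i && nth false b i))%N.
Proof. by case: k => [|k]; rewrite ?big_ord0 // big_ord_recl. Qed.

Lemma odd_sum_nth_flip_pair (c : seq bool) k j (t : k.-tuple bool) :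
  (j.+1 < k)%N -> nth false c j != nth false c j.+1 ->
  odd (\sum_(i < k) (nth false c i && nth false (flip_pair j t) i)) =
  ~~ odd (\sum_(i < k) (nth false c i && nth false t i)).
Proof.
move=> ltjk neq_c.
have ltj := ltnW ltjk.
have neq_j : Ordinal ltjk != Ordinal ltj by rewrite -val_eqE /= (gtn_eqF (ltnSn j)).
rewrite [in LHS](bigD1 (Ordinal ltj)) // [in RHS](bigD1 (Ordinal ltj)) //.
rewrite [in LHS](bigD1 (Ordinal ltjk)) // [in RHS](bigD1 (Ordinal ltjk)) //.
rewrite !oddD !nth_flip_pair // eqxx (gtn_eqF (ltnSn j)) eqxx orbT.
under eq_bigr => i /andP[ne_j ne_j1].
  rewrite nth_flip_pair // -!val_eqE /= in ne_j ne_j1 *.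
  rewrite (negbTE ne_j) (negbTE ne_j1).
over.
by move: neq_c; case: (nth false c j); case: (nth false c j.+1);
  case: (nth false t j); case: (nth false t j.+1); rewrite //= ?negbK.
Qed.

Lemma iota_split_pair k j : (j.+1 < k)%N ->
  iota 0 k = iota 0 j ++ [:: j; j.+1] ++ iota j.+2 (k - j.+2).
Proof. by move=> ltjk; rewrite -{1}(subnKC ltjk) !addSnnS iotaD. Qed.

Lemma prod_pair_negpred (R : pzSemiRingType) (I : Type) (a c : I) (P Q : pred I)
    (F : I -> R) :
  F a = F c -> F a * F a = 1 -> Q a = ~~ P a -> Q c = ~~ P c ->
  \prod_(i <- [:: a; c] | Q i) F i = \prod_(i <- [:: a; c] | P i) F i.
Proof.
move=> Fac Fa2 Qa Qc; rewrite !big_cons !big_nil Qa Qc -Fac.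
by case: (P a); case: (P c); rewrite /= ?mulr1 ?Fa2.
Qed.

Lemma prod_cat_pair (R : pzSemiRingType) (I : eqType) (r1 r2 : seq I) (a c : I)
    (P Q : pred I) (F : I -> R) :
  {in r1 ++ r2, P =1 Q} ->
  \prod_(i <- [:: a; c] | P i) F i = \prod_(i <- [:: a; c] | Q i) F i ->
  \prod_(i <- r1 ++ [:: a; c] ++ r2 | P i) F i =
  \prod_(i <- r1 ++ [:: a; c] ++ r2 | Q i) F i.
Proof.
move=> PQ Eac.
have eq_out r : {subset r <= r1 ++ r2} ->
    \prod_(i <- r | P i) F i = \prod_(i <- r | Q i) F i.
  move=> sub; rewrite -[LHS]big_filter -[RHS]big_filter.
  by rewrite (@eq_in_filter _ P Q) // => i /sub; apply: PQ.
by rewrite !big_cat Eac !eq_out // => i ri; rewrite mem_cat ri ?orbT.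
Qed.

Section ControlTensorAlgebra.
Variables (K : pzRingType) (A : lalgType K).
Variables (f g : nat -> A) (ns : seq nat) (mu : seq bool).

Definition ctensor_alg : A :=
  \sum_(b : (size ns).-tuple bool)
    ((-1) ^+ (\sum_(j < (size ns).-1) (nth false mu j && nth false b j.+1))%N
     *: ((\prod_(i <- rev (iota 0 (size ns)) | nth false b i) f (nth 0%N ns i))
         * (\prod_(i <- iota 0 (size ns) | ~~ nth false b i) g (nth 0%N ns i)))).

Variable j : nat.
Hypotheses (ltjk : (j.+1 < size ns)%N) (eq_ns : nth 0%N ns j = nth 0%N ns j.+1).
Hypotheses (f_invol : f (nth 0%N ns j) ^+ 2 = 1) (g_invol : g (nth 0%N ns j) ^+ 2 = 1).

Lemma nth_flip_pair_out (t : (size ns).-tuple bool) i :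
  i \in iota 0 j ++ iota j.+2 (size ns - j.+2) -> nth false (flip_pair j t) i = nth false t i.
Proof.
rewrite mem_cat !mem_iota add0n subnKC //.
case/orP=> [/andP[_ ltij] | /andP[leji ltik]].
  rewrite nth_flip_pair ?(ltn_trans ltij (ltnW ltjk)) //.
  by rewrite ltn_eqF // ltn_eqF // (ltn_trans ltij).
by rewrite nth_flip_pair // gtn_eqF ?(ltn_trans (ltnSn j) leji) // gtn_eqF.
Qed.

Lemma flip_pair_hbar_part (t : (size ns).-tuple bool) :
  \prod_(i <- rev (iota 0 (size ns)) | nth false (flip_pair j t) i) f (nth 0%N ns i) =
  \prod_(i <- rev (iota 0 (size ns)) | nth false t i) f (nth 0%N ns i).
Proof.
rewrite (iota_split_pair ltjk) !rev_cat -catA (_ : rev [:: j; j.+1] = [:: j.+1; j]) //.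
apply: prod_cat_pair => [i|].
  by rewrite mem_cat !mem_rev orbC -mem_cat; apply: nth_flip_pair_out.
apply: prod_pair_negpred; rewrite -?eq_ns -?expr2 //.
  by rewrite nth_flip_pair // eqxx orbT.
by rewrite nth_flip_pair ?(ltnW ltjk) // eqxx.
Qed.

Lemma flip_pair_htil_part (t : (size ns).-tuple bool) :
  \prod_(i <- iota 0 (size ns) | ~~ nth false (flip_pair j t) i) g (nth 0%N ns i) =
  \prod_(i <- iota 0 (size ns) | ~~ nth false t i) g (nth 0%N ns i).
Proof.
rewrite (iota_split_pair ltjk); apply: prod_cat_pair => [i /nth_flip_pair_out -> //|].
apply: prod_pair_negpred; rewrite -?eq_ns -?expr2 //.
  by rewrite nth_flip_pair ?(ltnW ltjk) // eqxx.
by rewrite nth_flip_pair // eqxx orbT.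
Qed.

Lemma sign_flip_pair (t : (size ns).-tuple bool) :
  nth false (false :: mu) j != nth false mu j ->
  (-1) ^+ (\sum_(i < (size ns).-1) (nth false mu i && nth false (flip_pair j t) i.+1))%N
  = - (-1) ^+ (\sum_(i < (size ns).-1) (nth false mu i && nth false t i.+1))%N :> K.
Proof.
move=> neq_mu; rewrite !sign_exponentE -signr_odd odd_sum_nth_flip_pair //.
by rewrite signrN signr_odd.
Qed.

(* [nth false (false :: mu) j] is the paper's mu_(j-1), with mu_0 = 0 at j = 0. *)
Lemma ctensor_alg_eq0 : nth false (false :: mu) j != nth false mu j -> ctensor_alg = 0.
Proof.
move=> neq_mu; rewrite /ctensor_alg.
pose Pj (t : (size ns).-tuple bool) := nth false t j.
apply: (sum_eq0_involution (flip_pairK j) (P := Pj)).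
  by move=> t; rewrite /Pj nth_flip_pair ?(ltnW ltjk) // eqxx.
by move=> t; rewrite sign_flip_pair // flip_pair_hbar_part flip_pair_htil_part scaleNr.
Qed.

End ControlTensorAlgebra.

Section SingleQubit.
Variable C : numClosedFieldType.
Implicit Types (U : nat -> 'M[C]_2) (O : 'M[C]_2).

Lemma ctensorE U O : ctensor U O = ctensor_alg (hbar U O) (htil U).
Proof. by []. Qed.

Lemma conj_sqr_eq1 (R : pzRingType) (w s v : R) :
  v * w = 1 -> w * v = 1 -> s ^+ 2 = 1 -> (w * s * v) ^+ 2 = 1.
Proof.
by move=> vw wv s2; rewrite expr2 -!mulrA (mulrA v) vw mul1r (mulrA s) -expr2 s2 mul1r.
Qed.

Lemma sigma_z_sqr : sigma_z C ^+ 2 = 1.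
Proof.
apply/matrixP => i j; rewrite expr2 -mulmxE !mxE !big_ord_recr big_ord0 /= !mxE.
by case: i => [[|[|?]] ?]; case: j => [[|[|?]] ?];
  rewrite //= ?(mul0r, mulr0, mulr1, add0r, addr0, mulrNN).
Qed.

Lemma htil_sqr U n : unitary (U n) -> htil U n ^+ 2 = 1.
Proof. by case=> UU' U'U; rewrite /htil !mulmxE conj_sqr_eq1 -?mulmxE ?sigma_z_sqr. Qed.

Lemma hbar_sqr U O n : O \in unitmx -> htil U n ^+ 2 = 1 -> hbar U O n ^+ 2 = 1.
Proof.
move=> unitO h2; rewrite /hbar sqrrN !mulmxE conj_sqr_eq1 // -mulmxE.
  exact: mulmxV.
exact: mulVmx.
Qed.

Lemma window_range L ns n : window L ns -> n \in ns -> (0 < n <= L)%N.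
Proof. by case/andP=> _ /allP; apply. Qed.

Lemma ctensor_window_eq0 L U O ns mu j :
    (forall n, (1 <= n <= L)%N -> unitary (U n)) -> unitary O -> window L ns ->
    (j.+1 < size ns)%N -> nth 0%N ns j = nth 0%N ns j.+1 ->
    nth false (false :: mu) j != nth false mu j ->
  ctensor U O ns mu = 0.
Proof.
move=> unitaryU [OO' _] win ltjk eq_ns neq_mu.
have /(window_range win)/unitaryU Un : nth 0%N ns j \in ns by rewrite mem_nth // ltnW.
have htil2 := htil_sqr Un.
have [unitO _] := mulmx1_unit OO'.
by rewrite ctensorE (ctensor_alg_eq0 ltjk eq_ns (hbar_sqr unitO htil2) htil2).
Qed.
End SingleQubit.

Unset Implicit Arguments.

Theorem mainTheorem5 (C : numClosedFieldType) (L : nat)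
    (U : nat -> 'M[C]_2) (O : 'M[C]_2) :
  (1 <= L)%N ->
  (forall n, (1 <= n <= L)%N -> unitary (U n)) ->
  is_hermitian O -> unitary O ->
  let T := ctensor U O in
  (forall n1 n2, window L [:: n1; n2] -> n1 = n2 ->
     T [:: n1; n2] [:: true] = 0) /\
  (forall n1 n2 n3, window L [:: n1; n2; n3] -> n2 = n3 ->
     T [:: n1; n2; n3] [:: false; true] = 0) /\
  (forall n1 n2 n3, window L [:: n1; n2; n3] -> n2 = n3 ->
     T [:: n1; n2; n3] [:: true; false] = 0) /\
  (forall n1 n2 n3, window L [:: n1; n2; n3] -> n1 = n2 ->
     T [:: n1; n2; n3] [:: true; true] = 0) /\
  (forall n1 n2 n3 n4, window L [:: n1; n2; n3; n4] -> n3 = n4 ->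
     T [:: n1; n2; n3; n4] [:: false; false; true] = 0) /\
  (forall n1 n2 n3 n4, window L [:: n1; n2; n3; n4] -> n3 = n4 ->
     T [:: n1; n2; n3; n4] [:: false; true; false] = 0) /\
  (forall n1 n2 n3 n4, window L [:: n1; n2; n3; n4] -> n2 = n3 ->
     T [:: n1; n2; n3; n4] [:: false; true; false] = 0) /\
  (forall n1 n2 n3 n4, window L [:: n1; n2; n3; n4] -> n2 = n3 ->
     T [:: n1; n2; n3; n4] [:: false; true; true] = 0) /\
  (forall n1 n2 n3 n4, window L [:: n1; n2; n3; n4] -> n2 = n3 ->
     T [:: n1; n2; n3; n4] [:: true; false; false] = 0) /\
  (forall n1 n2 n3 n4, window L [:: n1; n2; n3; n4] -> n1 = n2 ->
     T [:: n1; n2; n3; n4] [:: true; false; false] = 0) /\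
  (forall n1 n2 n3 n4, window L [:: n1; n2; n3; n4] -> n2 = n3 ->
     T [:: n1; n2; n3; n4] [:: true; false; true] = 0) /\
  (forall n1 n2 n3 n4, window L [:: n1; n2; n3; n4] -> n1 = n2 ->
     T [:: n1; n2; n3; n4] [:: true; false; true] = 0) /\
  (forall n1 n2 n3 n4, window L [:: n1; n2; n3; n4] -> n1 = n2 ->
     T [:: n1; n2; n3; n4] [:: true; true; false] = 0) /\
  (forall n1 n2 n3 n4, window L [:: n1; n2; n3; n4] -> n3 = n4 ->
     T [:: n1; n2; n3; n4] [:: true; true; false] = 0) /\
  (forall n1 n2 n3 n4, window L [:: n1; n2; n3; n4] -> n1 = n2 ->
     T [:: n1; n2; n3; n4] [:: true; true; true] = 0).
Proof.
move=> _ unitaryU _ unitaryO T.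
have vanish j ns mu : window L ns -> (j.+1 < size ns)%N ->
    nth 0%N ns j = nth 0%N ns j.+1 -> nth false (false :: mu) j != nth false mu j ->
  T ns mu = 0.
  exact: ctensor_window_eq0 unitaryU unitaryO.
split; first by move=> n1 n2 win eq12; apply: (vanish 0%N); rewrite //= eq12.
split; first by move=> n1 n2 n3 win eq23; apply: (vanish 1%N); rewrite //= eq23.
split; first by move=> n1 n2 n3 win eq23; apply: (vanish 1%N); rewrite //= eq23.
split; first by move=> n1 n2 n3 win eq12; apply: (vanish 0%N); rewrite //= eq12.
split; first by move=> n1 n2 n3 n4 win eq34; apply: (vanish 2%N); rewrite //= eq34.
split; first by move=> n1 n2 n3 n4 win eq34; apply: (vanish 2%N); rewrite //= eq34.
split; first by move=> n1 n2 n3 n4 win eq23; apply: (vanish 1%N); rewrite //= eq23.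
split; first by move=> n1 n2 n3 n4 win eq23; apply: (vanish 1%N); rewrite //= eq23.
split; first by move=> n1 n2 n3 n4 win eq23; apply: (vanish 1%N); rewrite //= eq23.
split; first by move=> n1 n2 n3 n4 win eq12; apply: (vanish 0%N); rewrite //= eq12.
split; first by move=> n1 n2 n3 n4 win eq23; apply: (vanish 1%N); rewrite //= eq23.
split; first by move=> n1 n2 n3 n4 win eq12; apply: (vanish 0%N); rewrite //= eq12.
split; first by move=> n1 n2 n3 n4 win eq12; apply: (vanish 0%N); rewrite //= eq12.
split; first by move=> n1 n2 n3 n4 win eq34; apply: (vanish 2%N); rewrite //= eq34.
by move=> n1 n2 n3 n4 win eq12; apply: (vanish 0%N); rewrite //= eq12.
Qed.
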